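(* Let $0\le\alpha<\alpha'_{\min}:=\min(v_0/8,\gamma/(2V^0))$, let $u_0\in C_\alpha$ and let $(s,u)$ be the solution of the free-interface problem with initial data $u_0$. Then for all $t>0$ $$|(T_1(t)u_0)_x|_\alpha\le \mathcal{M}(v_0,V^0,\alpha,\gamma):=V^0\max\Big[\frac{8}{e v_0},\ \frac12\Big(1+\frac{V^0}{v_0}\Big)e^{\alpha},\ \frac{2}{\sqrt\gamma}+6\Big],$$ where the $x$-derivative is taken for $x\neq s(t)$.
   Context: Fix $\gamma>0$, $0<v_0\le V^0$. The kinetics $g:[0,\infty)\to\mathbb{R}$ is monotonically decreasing, differentiable, $|g'|\le C$, $-V^0\le g\le -v_0$. Free-interface problem: find $s(t)$, $s(0)=0$, and $u(x,t)$ with $u_t=u_{xx}-\gamma u$ for $x\ne s(t)$, $t>0$; $u(x,0)=u_0(x)$; $g(u(s(t),t))=v(t)$; $u_x^+(s(t),t)-u_x^-(s(t),t)=v(t)$, with $v=s'$, $u_x^\pm$ one-sided derivatives, $u\to0$ at $\pm\infty$; the classical solution exists, is unique, and $-V^0\le v\le-v_0$. With $G(x,t,\xi,\tau)=[4\pi(t-\tau)]^{-1/2}\exp\{-(x-\xi)^2/(4(t-\tau))\}$, $(T_1(t)u_0)(x)=-\int_0^t e^{-\gamma(t-\tau)}G(x,t,s(\tau),\tau)v(\tau)d\tau$. Weighted norms: $|f|_\alpha=\sup_x e^{\alpha|x|}|f(x)|$, $C_\alpha=\{f\in C(\mathbb{R}):|f|_\alpha<\infty\}$; for functions associated with the solution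 at time $t$, $|f(\cdot,t)|_\alpha:=\sup_{x\ne s(t)} e^{\alpha|x-s(t)|}|f(x,t)|$. *)

From Stdlib Require Import Reals Lra.
From Coquelicot Require Import Coquelicot.
Open Scope R_scope.

Definition heatG (x t xi tau : R) : R :=
  / sqrt (4 * PI * (t - tau)) * exp (- (x - xi) ^ 2 / (4 * (t - tau))).

Definition T1 (gamma : R) (s v : R -> R) (t x : R) : R :=
  - RInt (fun tau => exp (- gamma * (t - tau)) * heatG x t (s tau) tau * v tau) 0 t.

Definition kinetics (v0 V0 C : R) (g : R -> R) : Prop :=
  (forall a b, 0 <= a -> a <= b -> g b <= g a) /\
  (forall a, 0 < a -> ex_derive g a /\ Rabs (Derive g a) <= C) /\
  (forall a, 0 <= a -> - V0 <= g a <= - v0).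

Definition in_C_alpha (alpha : R) (f : R -> R) : Prop :=
  (forall x, continuous f x) /\
  exists K, forall x, exp (alpha * Rabs x) * Rabs (f x) <= K.

Definition fi_solution (gamma v0 V0 : R) (g u0 : R -> R)
    (s v : R -> R) (u : R -> R -> R) : Prop :=
  s 0 = 0 /\
  filterlim s (at_right 0) (locally 0) /\
  (forall t, 0 < t -> is_derive s t (v t)) /\
  (forall t, 0 < t -> continuous v t) /\
  (forall t, 0 <= t -> - V0 <= v t <= - v0) /\
  (forall x t, 0 <= t ->
     filterlim (fun p : R * R => u (fst p) (snd p))
       (within (fun p : R * R => 0 <= snd p) (locally (x, t))) (locally (u x t))) /\
  (forall x, u x 0 = u0 x) /\
  (forall x t, 0 < t -> x <> s t ->
     ex_derive (fun tau => u x tau) t /\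
     (forall y, y <> s t -> ex_derive (fun z => u z t) y) /\
     ex_derive (fun y => Derive (fun z => u z t) y) x /\
     Derive (fun tau => u x tau) t =
       Derive (fun y => Derive (fun z => u z t) y) x - gamma * u x t) /\
  (forall t, 0 < t -> 0 <= u (s t) t /\ g (u (s t) t) = v t) /\
  (forall t, 0 < t -> exists dp dm : R,
     filterlim (fun h => (u (s t + h) t - u (s t) t) / h) (at_right 0) (locally dp) /\
     filterlim (fun h => (u (s t + h) t - u (s t) t) / h) (at_left 0) (locally dm) /\
     dp - dm = v t) /\
  (forall t, 0 <= t ->
     is_lim (fun x => u x t) p_infty 0 /\ is_lim (fun x => u x t) m_infty 0).

Definition bigM (v0 V0 alpha gamma : R) : R :=
  V0 * Rmax (8 / (exp 1 * v0))
            (Rmax (/ 2 * (1 + V0 / v0) * exp alpha) (2 / sqrt gamma + 6)).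

(* Write z = x - s(t) and, for tau < t, sigma = t - tau and d = s(tau) - s(t), so that
   v0 sigma <= d <= V0 sigma.  The x-derivative of the integrand of T_1 is a Gaussian derivative in
   Y = z - d; the conditions on alpha let the weight e^(alpha |z|) be absorbed by e^(-gamma sigma)
   and half of the Gaussian exponent, and what is left is at most |v(tau)| / (4 sqrt pi) dens(d) with
   dens(d) = |z| (d/V0 + z^2/48)^(-3/2) + rho(|d - max(z,0)|),   rho(r) = r (r/V0 + r^2/12)^(-3/2).
   dens has an explicit primitive whose total increase on [0, oo) is at most 2 V0 sqrt 48 + 4 V0 sqrt 12,
   and d' = v = -|v|, so the integral over tau is bounded by the increase of that primitive along d.
   As dens has an integrable singularity where d crosses max(z,0), this change of variables is done
   by comparing derivatives (monotonicity) rather than by substitution.  The constants give 6 V0,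
   the last entry of the maximum defining M.  Differentiating under the integral sign is justified
   by a bound on the second x-derivative of the integrand that is uniform near x. *)

From Stdlib Require Import Reals Lra Classical.
From Coquelicot Require Import Coquelicot.
Open Scope R_scope.

(** * Riemann integrability and comparison with a primitive *)

Lemma ex_RInt_of_approx (f : R -> R) (a b : R) : a < b ->
  (forall eps : posreal, exists g h : R -> R,
     ex_RInt g a b /\ ex_RInt h a b /\
     (forall x, a <= x <= b -> Rabs (f x - g x) <= h x) /\ RInt h a b < eps) ->
  ex_RInt f a b.
Proof.
  intros Hab Happrox.
  assert (Hsign : sign (b - a) = 1) by (apply sign_eq_1; lra).
  apply (proj1 (filterlim_locally_cauchy (F := Riemann_fine a b)
                  (fun ptd => scal (sign (b - a)) (Riemann_sum f ptd)))).
  intros eps.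
  assert (He7 : 0 < eps / 7) by (destruct eps; simpl; lra).
  destruct (Happrox (mkposreal _ He7)) as (g & h & [Ig HIg] & [Ih HIh] & Hfg & Hint).
  simpl in Hint; rewrite (is_RInt_unique _ _ _ _ HIh) in Hint.
  pose proof (proj1 (filterlim_locally _ _) HIg (mkposreal _ He7)) as Fg.
  pose proof (proj1 (filterlim_locally _ _) HIh (mkposreal _ He7)) as Fh.
  exists (fun ptd => (pointed_subdiv ptd /\ SF_h ptd = Rmin a b /\
                      seq.last (SF_h ptd) (SF_lx ptd) = Rmax a b) /\
     ball Ig (eps / 7) (scal (sign (b - a)) (Riemann_sum g ptd)) /\
     ball Ih (eps / 7) (scal (sign (b - a)) (Riemann_sum h ptd))).
  split.
  - unfold Riemann_fine, within in *.
    generalize (filter_and _ _ Fg Fh); apply filter_imp; intros ptd [? ?] ?; auto.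
  - rewrite Hsign, Rmin_left, Rmax_right by lra.
    assert (close : forall u, (pointed_subdiv u /\ SF_h u = a /\ seq.last (SF_h u) (SF_lx u) = b) ->
       ball Ig (eps / 7) (scal 1 (Riemann_sum g u)) ->
       ball Ih (eps / 7) (scal 1 (Riemann_sum h u)) ->
       Rabs (Riemann_sum f u - Ig) < 3 * (eps / 7)).
    { intros u (Hp & Hu1 & Hu2) Bg Bh.
      unfold ball, scal in Bg, Bh; simpl in Bg, Bh;
        unfold AbsRing_ball, abs, minus, plus, opp, mult in Bg, Bh; simpl in Bg, Bh.
      rewrite Rmult_1_l in Bg, Bh.
      assert (N : Rabs (Riemann_sum f u - Riemann_sum g u) <= Riemann_sum h u).
      { rewrite <- (Riemann_sum_minus (V := R_ModuleSpace)).
        apply (Riemann_sum_norm (V := R_NormedModule)); auto.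
        intros x Hx; rewrite Hu2, Hu1 in Hx; apply Hfg, Hx. }
      apply Rabs_def2 in Bg; apply Rabs_def2 in Bh; apply Rabs_le_between in N.
      apply Rabs_def1; lra. }
    intros u w [Du [Bgu Bhu]] [Dw [Bgw Bhw]]; rewrite Hsign in *.
    pose proof (close u Du Bgu Bhu) as Cu; pose proof (close w Dw Bgw Bhw) as Cw.
    unfold ball, scal; simpl; unfold AbsRing_ball, abs, minus, plus, opp, mult; simpl.
    rewrite !Rmult_1_l.
    apply Rabs_def2 in Cu; apply Rabs_def2 in Cw; apply Rabs_def1; lra.
Qed.

Lemma is_RInt_const_open (k : R -> R) (u v w : R) : u < v ->
  (forall x, u < x < v -> k x = w) -> is_RInt k u v ((v - u) * w).
Proof.
  intros Huv Hk.
  apply is_RInt_ext with (fun _ => w).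
  - intros x Hx; rewrite Rmin_left, Rmax_right in Hx by lra; symmetry; apply Hk, Hx.
  - apply (is_RInt_const (V := R_NormedModule)).
Qed.

Definition truncate (c d : R) (f : R -> R) (x : R) : R :=
  if Rle_dec c x then if Rle_dec x d then f x else 0 else 0.

Lemma truncate_inside (c d : R) (f : R -> R) (x : R) : c <= x <= d -> truncate c d f x = f x.
Proof. intros Hx; unfold truncate; destruct (Rle_dec c x), (Rle_dec x d); lra. Qed.

Lemma truncate_outside (c d : R) (f : R -> R) (x : R) : x < c \/ d < x -> truncate c d f x = 0.
Proof. intros Hx; unfold truncate; destruct (Rle_dec c x), (Rle_dec x d); lra. Qed.

Lemma ex_RInt_truncate (f : R -> R) (a b c d : R) : a < c -> c < d -> d < b ->
  ex_RInt f c d -> ex_RInt (truncate c d f) a b.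
Proof.
  intros Hac Hcd Hdb Hf.
  apply ex_RInt_Chasles with c; [| apply ex_RInt_Chasles with d].
  - exists ((c - a) * 0); apply is_RInt_const_open; [lra |].
    intros x Hx; apply truncate_outside; lra.
  - apply ex_RInt_ext with f; [| exact Hf].
    intros x Hx; rewrite Rmin_left, Rmax_right in Hx by lra; symmetry; apply truncate_inside; lra.
  - exists ((b - d) * 0); apply is_RInt_const_open; [lra |].
    intros x Hx; apply truncate_outside; lra.
Qed.

Lemma is_RInt_truncate_compl (B a b c d : R) : a < c -> c < d -> d < b ->
  is_RInt (fun x => B - truncate c d (fun _ => B) x) a b ((c - a) * B + ((d - c) * 0 + (b - d) * B)).
Proof.
  intros Hac Hcd Hdb.
  apply (is_RInt_Chasles (V := R_NormedModule)) with c;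
    [| apply (is_RInt_Chasles (V := R_NormedModule)) with d];
    apply is_RInt_const_open; try lra; intros x Hx;
    solve [ rewrite truncate_outside by lra; ring | rewrite truncate_inside by lra; ring ].
Qed.

Lemma ex_RInt_of_bounded_interior (f : R -> R) (a b B : R) : a < b ->
  (forall x, a <= x <= b -> Rabs (f x) <= B) ->
  (forall c d, a < c -> c < d -> d < b -> ex_RInt f c d) ->
  ex_RInt f a b.
Proof.
  intros Hab HB Hf.
  apply ex_RInt_of_approx; auto.
  intros eps.
  assert (HB0 : 0 <= B) by (pose proof (HB a) as Ha; pose proof (Rabs_pos (f a)); lra).
  set (eta := Rmin ((b - a) / 4) (eps / (2 * (B + 1)))).
  assert (Heta : 0 < eta).
  { apply Rmin_pos; [lra | destruct eps; simpl; apply Rdiv_lt_0_compat; lra]. }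
  assert (Heta1 : eta <= (b - a) / 4) by apply Rmin_l.
  assert (Heta2 : eta * (2 * (B + 1)) <= eps).
  { assert (He : eta <= eps / (2 * (B + 1))) by apply Rmin_r.
    replace (pos eps) with (eps / (2 * (B + 1)) * (2 * (B + 1))) by (field; lra).
    apply Rmult_le_compat_r; lra. }
  (* truncate f to [a + eta, b - eta] and dominate the error by B outside *)
  pose proof (is_RInt_truncate_compl B a b (a + eta) (b - eta) ltac:(lra) ltac:(lra) ltac:(lra)) as Ih.
  exists (truncate (a + eta) (b - eta) f), (fun x => B - truncate (a + eta) (b - eta) (fun _ => B) x).
  repeat split.
  - apply ex_RInt_truncate, Hf; lra.
  - eexists; exact Ih.
  - intros x Hx; destruct (Rle_dec (a + eta) x), (Rle_dec x (b - eta)).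
    + rewrite !truncate_inside, Rminus_diag, Rabs_R0 by lra; lra.
    + rewrite !truncate_outside, !Rminus_0_r by lra; auto.
    + rewrite !truncate_outside, !Rminus_0_r by lra; auto.
    + rewrite !truncate_outside, !Rminus_0_r by lra; auto.
  - replace (RInt _ a b) with ((a + eta - a) * B + ((b - eta - (a + eta)) * 0 + (b - (b - eta)) * B))
      by (symmetry; apply is_RInt_unique, Ih).
    destruct eps as [e He]; simpl in *; nra.
Qed.

Lemma le_of_derive_nonneg (F dF : R -> R) (p q : R) : p <= q ->
  (forall r, p < r < q -> is_derive F r (dF r) /\ 0 <= dF r) ->
  (forall r, p <= r <= q -> continuous F r) -> F p <= F q.
Proof.
  intros Hpq Hd Hc.
  destruct (Req_dec p q) as [<- | Hne]; [lra |].
  assert (prF : forall c, p < c < q -> derivable_pt F c).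
  { intros c Hcpq; exists (dF c); apply is_derive_Reals, Hd, Hcpq. }
  assert (prid : forall c, p < c < q -> derivable_pt id c) by (intros; apply derivable_pt_id).
  destruct (MVT F id p q prF prid) as [c [Hcpq HM]]; [lra | | |].
  - intros r Hr; apply continuity_pt_filterlim, Hc, Hr.
  - intros r _; apply derivable_continuous_pt, derivable_pt_id.
  - rewrite (derive_pt_eq_0 F c (dF c) (prF c Hcpq)) in HM by apply is_derive_Reals, Hd, Hcpq.
    rewrite (derive_pt_eq_0 id c 1 (prid c Hcpq)) in HM by apply derivable_pt_lim_id.
    unfold id in HM; destruct (Hd c Hcpq) as [_ Hpos]; nra.
Qed.

Lemma le_of_derive_nonneg_but_one (F dF : R -> R) (E : R -> Prop) (p q : R) : p <= q ->
  (forall r1 r2, E r1 -> E r2 -> r1 = r2) ->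
  (forall r, p < r < q -> ~ E r -> is_derive F r (dF r) /\ 0 <= dF r) ->
  (forall r, p <= r <= q -> continuous F r) -> F p <= F q.
Proof.
  intros Hpq HE Hd Hc.
  destruct (classic (exists e, p < e < q /\ E e)) as [[e [He Ee]] | Hno].
  - assert (Hnot : forall r, r <> e -> ~ E r) by (intros r Hr Er; apply Hr, (HE r e Er Ee)).
    apply Rle_trans with (F e); apply le_of_derive_nonneg with dF; try lra;
      intros r Hr; solve [apply Hd; [lra | apply Hnot; lra] | apply Hc; lra].
  - apply le_of_derive_nonneg with dF; auto.
    intros r Hr; apply Hd; [exact Hr | intros Er; apply Hno; eauto].
Qed.

Lemma le_of_derive_nonneg_open (F dF : R -> R) (E : R -> Prop) (p q : R) : p <= q ->
  (forall r1 r2, E r1 -> E r2 -> r1 = r2) ->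
  (forall r, p < r < q -> ~ E r -> is_derive F r (dF r) /\ 0 <= dF r) ->
  (forall r, p < r < q -> continuous F r) ->
  filterlim F (at_right p) (locally (F p)) ->
  filterlim F (at_left q) (locally (F q)) ->
  F p <= F q.
Proof.
  intros Hpq HE Hd Hc Hp Hq.
  destruct (Req_dec p q) as [<- | Hne]; [lra |].
  assert (Hin : forall a b, p < a -> a <= b -> b < q -> F a <= F b).
  { intros a b Ha Hab Hb; apply le_of_derive_nonneg_but_one with dF E; auto.
    - intros r Hr; apply Hd; lra.
    - intros r Hr; apply Hc; lra. }
  assert (Hleft : forall b, p < b < q -> F p <= F b).
  { intros b Hb.
    apply (filterlim_le (F := at_right p)
             F (fun _ => F b) (F p) (F b)); [| exact Hp | apply filterlim_const].
    exists (mkposreal (b - p) ltac:(lra)); intros a Ha Hpa.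
    apply Hin; [exact Hpa | | lra].
    change (Rabs (a - p) < b - p) in Ha; apply Rabs_def2 in Ha; lra. }
  apply (filterlim_le (F := at_left q)
           (fun _ => F p) F (F p) (F q)); [| apply filterlim_const | exact Hq].
  exists (mkposreal (q - p) ltac:(lra)); intros b Hb Hbq.
  change (Rabs (b - q) < q - p) in Hb; apply Hleft; apply Rabs_def2 in Hb; lra.
Qed.

Lemma filterlim_of_Rabs_sub_le (F : R -> R) (G : (R -> Prop) -> Prop) {FG : Filter G} (p K : R) :
  filter_le G (locally p) ->
  G (fun r => Rabs (F r - F p) <= K * Rabs (r - p)) ->
  filterlim F G (locally (F p)).
Proof.
  intros Hle HK.
  apply filterlim_locally; intros eps.
  assert (Hdel : 0 < eps / (Rabs K + 1)) by (apply Rdiv_lt_0_compat; [apply cond_pos | pose proof (Rabs_pos K); lra]).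
  eapply filter_imp; [| exact (filter_and _ _ HK (Hle _ (locally_ball p (mkposreal _ Hdel))))].
  intros r [Hr Hball].
  change (Rabs (F r - F p) < eps).
  change (Rabs (r - p) < eps / (Rabs K + 1)) in Hball.
  assert (Hm : (Rabs K + 1) * (eps / (Rabs K + 1)) = eps) by (field; pose proof (Rabs_pos K); lra).
  pose proof (Rle_abs K); pose proof (Rabs_pos (r - p)); pose proof (Rabs_pos K); nra.
Qed.

Section BoundedContinuous.

Variables (f : R -> R) (p q L : R).
Hypotheses (Hpq : p < q) (Hbound : forall r, p <= r <= q -> Rabs (f r) <= L)
           (Hcont : forall r, p < r < q -> continuous f r).

Lemma ex_RInt_of_bounded_continuous (a b : R) : p <= a <= b -> b <= q -> ex_RInt f a b.
Proof.
  intros Hab Hbq; destruct (Req_dec a b) as [<- | Hne]; [apply ex_RInt_point |].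
  apply ex_RInt_of_bounded_interior with L; [lra | intros; apply Hbound; lra |].
  intros c d Hc Hcd Hd; apply (ex_RInt_continuous (V := R_CompleteNormedModule)).
  intros r Hr; rewrite Rmin_left, Rmax_right in Hr by lra; apply Hcont; lra.
Qed.

Lemma RInt_lipschitz (a b : R) : p <= a <= b -> b <= q ->
  Rabs (RInt f p b - RInt f p a) <= L * Rabs (b - a).
Proof.
  intros Hab Hbq.
  assert (Hchasles : RInt f p a + RInt f a b = RInt f p b).
  { exact (RInt_Chasles (V := R_CompleteNormedModule) f p a b
             (ex_RInt_of_bounded_continuous p a ltac:(lra) ltac:(lra))
             (ex_RInt_of_bounded_continuous a b Hab Hbq)). }
  replace (RInt f p b - RInt f p a) with (RInt f a b) by lra.
  rewrite (Rabs_right (b - a)), Rmult_comm by lra.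
  apply abs_RInt_le_const; [lra | apply ex_RInt_of_bounded_continuous; lra | intros; apply Hbound; lra].
Qed.

Lemma is_derive_RInt_upper (r : R) : p < r < q -> is_derive (fun r => RInt f p r) r (f r).
Proof.
  intros Hr; apply (is_derive_RInt (V := R_NormedModule) f (fun r => RInt f p r) p r); [| apply Hcont, Hr].
  exists (mkposreal (Rmin (r - p) (q - r)) ltac:(apply Rmin_pos; lra)); intros b Hball.
  change (Rabs (b - r) < Rmin (r - p) (q - r)) in Hball.
  pose proof (Rmin_l (r - p) (q - r)); pose proof (Rmin_r (r - p) (q - r)).
  apply Rabs_def2 in Hball.
  apply (RInt_correct (V := R_CompleteNormedModule)), ex_RInt_of_bounded_continuous; lra.
Qed.

Lemma abs_RInt_le_primitive (H dH : R -> R) (E : R -> Prop) :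
  (forall r1 r2, E r1 -> E r2 -> r1 = r2) ->
  (forall r, p < r < q -> ~ E r -> is_derive H r (dH r) /\ Rabs (f r) <= dH r) ->
  (forall r, p < r < q -> continuous H r) ->
  filterlim H (at_right p) (locally (H p)) ->
  filterlim H (at_left q) (locally (H q)) ->
  Rabs (RInt f p q) <= H q - H p.
Proof.
  intros HE HdH HcH HHp HHq.
  set (I := fun r => RInt f p r).
  assert (HI0 : I p = 0) by exact (RInt_point (V := R_CompleteNormedModule) p f).
  (* H - I and H + I are nondecreasing *)
  assert (Hcmp : forall sgn, Rabs sgn = 1 -> H p + sgn * I p <= H q + sgn * I q).
  { intros sgn Hsgn.
    assert (Hlip : forall a b, p <= a <= b -> b <= q ->
              Rabs (sgn * I b - sgn * I a) <= L * Rabs (b - a)).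
    { intros a b Hab Hbq; rewrite <- Rmult_minus_distr_l, Rabs_mult, Hsgn, Rmult_1_l.
      apply RInt_lipschitz; auto. }
    apply (le_of_derive_nonneg_open (fun r => H r + sgn * I r) (fun r => dH r + sgn * f r) E);
      auto; [lra | ..].
    - intros r Hr HnE; destruct (HdH r Hr HnE) as [Hd Hle]; split.
      + apply (is_derive_plus (K := R_AbsRing) (V := R_NormedModule)); [exact Hd |].
        apply is_derive_scal, is_derive_RInt_upper, Hr.
      + pose proof (Rle_abs (- (sgn * f r))); rewrite Rabs_Ropp, Rabs_mult, Hsgn in *; lra.
    - intros r Hr; apply (continuous_plus (V := R_NormedModule)); [apply HcH, Hr |].
      apply (continuous_mult (K := R_AbsRing) (fun _ => sgn) I); [apply continuous_const |].
      apply (ex_derive_continuous (V := R_NormedModule)); eexists; apply is_derive_RInt_upper, Hr.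
    - eapply filterlim_comp_2; [exact HHp | | apply (filterlim_plus (H p) (sgn * I p))].
      apply (filterlim_of_Rabs_sub_le (fun r => sgn * I r) _ p L); [apply filter_le_within |].
      exists (mkposreal (q - p) ltac:(lra)); intros r Hr Hpr.
      change (Rabs (r - p) < q - p) in Hr; apply Rabs_def2 in Hr; apply Hlip; lra.
    - eapply filterlim_comp_2; [exact HHq | | apply (filterlim_plus (H q) (sgn * I q))].
      apply (filterlim_of_Rabs_sub_le (fun r => sgn * I r) _ q L); [apply filter_le_within |].
      exists (mkposreal (q - p) ltac:(lra)); intros r Hr Hrq.
      change (Rabs (r - q) < q - p) in Hr; apply Rabs_def2 in Hr.
      rewrite <- Rabs_Ropp, Ropp_minus_distr, (Rabs_minus_sym r q); apply Hlip; lra. }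
  pose proof (Hcmp 1 Rabs_R1); pose proof (Hcmp (-1) ltac:(rewrite Rabs_left; lra)).
  fold (I q); rewrite HI0 in *; unfold Rabs; destruct Rcase_abs; lra.
Qed.

End BoundedContinuous.

(** * Interface motion and differentiation under the integral sign *)

Lemma displacement_bounds (s v : R -> R) (p v0 V0 : R) :
  filterlim s (at_right p) (locally (s p)) ->
  (forall r, p < r -> is_derive s r (v r)) ->
  (forall r, p < r -> - V0 <= v r <= - v0) ->
  forall r1 r2, p <= r1 <= r2 -> v0 * (r2 - r1) <= s r1 - s r2 <= V0 * (r2 - r1).
Proof.
  intros Hs_right Hds Hv.
  assert (Hinterior : forall r1 r2, p < r1 <= r2 ->
            v0 * (r2 - r1) <= s r1 - s r2 <= V0 * (r2 - r1)).
  { intros r1 r2 Hr.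
    destruct (MVT_gen s r1 r2 v) as [c [Hc E]].
    - intros r Hr'; rewrite Rmin_left, Rmax_right in Hr' by lra; apply Hds; lra.
    - intros r Hr'; rewrite Rmin_left, Rmax_right in Hr' by lra.
      apply continuity_pt_filterlim, (ex_derive_continuous (V := R_NormedModule)).
      eexists; apply Hds; lra.
    - rewrite Rmin_left, Rmax_right in Hc by lra.
      specialize (Hv c ltac:(lra)); split; nra. }
  intros r1 r2 Hr.
  destruct (Rle_lt_or_eq_dec p r1 (proj1 Hr)) as [Hp | <-]; [apply Hinterior; lra |].
  destruct (Rle_lt_or_eq_dec p r2 (proj2 Hr)) as [Hp2 | <-]; [| rewrite !Rminus_diag; lra].
  (* let r1 decrease to p in the interior bounds *)
  assert (Hlim : forall c, filterlim (fun r => c * (r2 - r)) (at_right p) (locally (c * (r2 - p)))).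
  { intros c; apply (filterlim_filter_le_1 (F := locally p)); [apply filter_le_within |].
    apply (ex_derive_continuous (V := R_NormedModule) (fun r => c * (r2 - r))); auto_derive; auto. }
  assert (Hs_lim : filterlim (fun r => s r - s r2) (at_right p) (locally (s p - s r2))).
  { apply (filterlim_comp _ _ _ s (fun y => y - s r2) _ _ _ Hs_right).
    apply (ex_derive_continuous (V := R_NormedModule) (fun y => y - s r2)); auto_derive; auto. }
  assert (Hnear : at_right p (fun r => v0 * (r2 - r) <= s r - s r2 <= V0 * (r2 - r))).
  { exists (mkposreal (r2 - p) ltac:(lra)); intros r Hball Hpr.
    change (Rabs (r - p) < r2 - p) in Hball; apply Rabs_def2 in Hball.
    apply Hinterior; lra. }
  split.
  - apply (filterlim_le (F := at_right p) _ _ (v0 * (r2 - p)) (s p - s r2)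
             (filter_imp _ _ (fun r H => proj1 H) Hnear) (Hlim v0) Hs_lim).
  - apply (filterlim_le (F := at_right p) _ _ (s p - s r2) (V0 * (r2 - p))
             (filter_imp _ _ (fun r H => proj2 H) Hnear) Hs_lim (Hlim V0)).
Qed.

Lemma taylor_remainder_le (g g1 g2 : R -> R) (x del L : R) :
  (forall y, is_derive g y (g1 y)) -> (forall y, is_derive g1 y (g2 y)) ->
  (forall y, Rabs (y - x) <= del -> Rabs (g2 y) <= L) ->
  forall y, Rabs (y - x) <= del -> Rabs (g y - g x - (y - x) * g1 x) <= L * (y - x) ^ 2.
Proof.
  intros Hg Hg1 HL y Hy.
  set (k := fun e => g e - g x - (e - x) * g1 x).
  assert (Hk : forall e, is_derive k e (g1 e - g1 x)).
  { intros e; unfold k.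
    apply (is_derive_ext (fun e => g e + (- g x - e * g1 x + x * g1 x)));
      [intros t; apply Rminus_diag_uniq; ring |].
    replace (g1 e - g1 x) with (plus (g1 e) (-1 * g1 x)) by (unfold plus; simpl; ring).
    apply (is_derive_plus (K := R_AbsRing) (V := R_NormedModule)); [apply Hg |].
    auto_derive; auto; ring. }
  destruct (MVT_cor4 k (fun e => g1 e - g1 x) x del (fun c _ => Hk c) y Hy) as [c [Ec Hc]].
  destruct (MVT_cor4 g1 g2 x del (fun c _ => Hg1 c) c ltac:(lra)) as [c' [Ec' Hc']].
  replace (g y - g x - (y - x) * g1 x) with (k y - k x) by (unfold k; ring).
  rewrite Ec, Ec', !Rabs_mult.
  specialize (HL c' ltac:(lra)).
  pose proof (Rabs_pos (c - x)); pose proof (Rabs_pos (y - x)); pose proof (Rabs_pos (g2 c')).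
  rewrite <- (pow2_abs (y - x)).
  assert (Rabs (g2 c') * Rabs (c - x) <= L * Rabs (y - x)) by (apply Rmult_le_compat; lra).
  nra.
Qed.

Section DominatedParameter.

Variables (F F1 F2 : R -> R -> R) (x a b del L : R).
Hypotheses (Hab : a <= b) (Hdel : 0 < del)
           (HF : forall y r, is_derive (fun y => F y r) y (F1 y r))
           (HF1 : forall y r, is_derive (fun y => F1 y r) y (F2 y r))
           (HL : forall y r, Rabs (y - x) <= del -> a <= r <= b -> Rabs (F2 y r) <= L)
           (Hint : forall y, Rabs (y - x) <= del -> ex_RInt (F y) a b)
           (Hint1 : ex_RInt (F1 x) a b).

Lemma RInt_param_increment_le (h : R) : Rabs h <= del ->
  Rabs (RInt (F (x + h)) a b - RInt (F x) a b - h * RInt (F1 x) a b) <= (b - a) * (L * h ^ 2).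
Proof.
  intros Hh.
  assert (Hxh : Rabs (x + h - x) <= del) by (replace (x + h - x) with h by ring; exact Hh).
  assert (Hx : Rabs (x - x) <= del) by (rewrite Rminus_diag, Rabs_R0; lra).
  (* the error is the integral of the Taylor remainders *)
  assert (Hrem : is_RInt (fun r => F (x + h) r - F x r - h * F1 x r) a b
                   (RInt (F (x + h)) a b - RInt (F x) a b - h * RInt (F1 x) a b)).
  { apply (is_RInt_minus (V := R_NormedModule));
      [apply (is_RInt_minus (V := R_NormedModule)) | apply (is_RInt_scal (V := R_NormedModule))];
      apply (RInt_correct (V := R_CompleteNormedModule)); auto. }
  replace (RInt (F (x + h)) a b - RInt (F x) a b - h * RInt (F1 x) a b)
    with (RInt (fun r => F (x + h) r - F x r - h * F1 x r) a b) by (apply is_RInt_unique, Hrem).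
  apply abs_RInt_le_const; [lra | eexists; exact Hrem |]; intros r Hr.
  pose proof (taylor_remainder_le (fun y => F y r) (fun y => F1 y r) (fun y => F2 y r) x del L
                (fun y => HF y r) (fun y => HF1 y r) (fun y Hy => HL y r Hy Hr) (x + h) Hxh) as T.
  replace (x + h - x) with h in T by ring; exact T.
Qed.

Lemma is_derive_RInt_param_dominated : is_derive (fun y => RInt (F y) a b) x (RInt (F1 x) a b).
Proof.
  assert (Hx : Rabs (x - x) <= del) by (rewrite Rminus_diag, Rabs_R0; lra).
  assert (HL0 : 0 <= L) by (pose proof (HL x a Hx ltac:(lra)); pose proof (Rabs_pos (F2 x a)); lra).
  apply is_derive_Reals; intros eps Heps.
  set (K := (b - a) * L + 1).
  assert (HK : 0 < K) by (unfold K; nra).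
  assert (Hd : 0 < Rmin del (eps / K)) by (apply Rmin_pos; [lra | apply Rdiv_lt_0_compat; lra]).
  exists (mkposreal _ Hd); simpl; intros h Hh0 Hh.
  pose proof (Rmin_l del (eps / K)); pose proof (Rmin_r del (eps / K)).
  pose proof (RInt_param_increment_le h ltac:(lra)) as B.
  assert (Hhp : 0 < Rabs h) by (apply Rabs_pos_lt; auto).
  replace ((RInt (F (x + h)) a b - RInt (F x) a b) / h - RInt (F1 x) a b)
    with ((RInt (F (x + h)) a b - RInt (F x) a b - h * RInt (F1 x) a b) / h) by (field; auto).
  rewrite Rabs_div by auto.
  apply Rmult_lt_reg_r with (Rabs h); auto.
  unfold Rdiv; rewrite Rmult_assoc, Rinv_l by lra.
  rewrite <- (pow2_abs h) in B.
  assert (Hlt : K * Rabs h < eps).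
  { replace eps with (K * (eps / K)) by (field; lra); apply Rmult_lt_compat_l; lra. }
  unfold K in Hlt; nra.
Qed.

End DominatedParameter.

(** * Uniform bounds on the integrand of T_1 *)

Lemma Rinv_exp_mul_pow_le (n : nat) (u : R) : (0 < n)%nat -> 0 <= u ->
  / exp u * u ^ n <= INR n ^ n.
Proof.
  intros Hn Hu.
  assert (HnR : 0 < INR n) by (apply lt_0_INR; exact Hn).
  assert (Hexp : (u / INR n) ^ n <= exp u).
  { replace (exp u) with (exp (u / INR n) ^ n).
    2: { rewrite <- Rpower_pow by apply exp_pos; unfold Rpower; rewrite ln_exp.
         f_equal; field; lra. }
    apply pow_incr; split.
    - apply Rmult_le_pos; [lra | left; apply Rinv_0_lt_compat, HnR].
    - pose proof (exp_ineq1_le (u / INR n)); lra. }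
  pose proof (exp_pos u); pose proof (pow_lt _ n HnR).
  unfold Rdiv in Hexp; rewrite Rpow_mult_distr, pow_inv in Hexp.
  apply Rmult_le_reg_l with (exp u); [lra |].
  rewrite <- Rmult_assoc, Rinv_r, Rmult_1_l by lra.
  apply Rmult_le_reg_r with (/ INR n ^ n); [apply Rinv_0_lt_compat; lra |].
  rewrite Rmult_assoc, Rinv_r, Rmult_1_r by lra; exact Hexp.
Qed.

Definition gauss_factor (sg Y : R) : R :=
  exp (- Y ^ 2 * / (4 * sg)) * (1 + Y ^ 2) * (1 + / sg) ^ 2 * / sqrt sg.

(* From u e^(-u) <= 1 when sg1 <= sg, and u^3 e^(-u) <= 27, u^4 e^(-u) <= 256 when m <= Y^2,
   where u = Y^2 / (4 sg). *)
Definition gauss_factor_bound (sg1 m T : R) : R :=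
  (1 + 4 * T) * (1 + / sg1) ^ 2 * / sqrt sg1 + (27 + 1024 * T) * 64 * (T + 1) ^ 3 / m ^ 3.

Lemma gauss_factor_bound_nonneg (sg1 m T : R) : 0 < sg1 -> 0 < m -> 0 <= T ->
  0 <= (1 + 4 * T) * (1 + / sg1) ^ 2 * / sqrt sg1 /\
  0 <= (27 + 1024 * T) * 64 * (T + 1) ^ 3 / m ^ 3.
Proof.
  intros Hsg1 Hm HT; split.
  - apply Rmult_le_pos; [apply Rmult_le_pos; [lra | apply pow2_ge_0] |].
    left; apply Rinv_0_lt_compat, sqrt_lt_R0; auto.
  - apply Rmult_le_pos; [apply Rmult_le_pos; [lra | apply pow_le; lra] |].
    left; apply Rinv_0_lt_compat, pow_lt; auto.
Qed.

Section GaussFactor.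

Variables (sg Y T : R).
Hypotheses (Hsg : 0 < sg) (HT : sg <= T).

Let u := Y ^ 2 / (4 * sg).

Let gauss_factor_eq : gauss_factor sg Y = / exp u * (1 + 4 * sg * u) * (1 + / sg) ^ 2 * / sqrt sg.
Proof.
  assert (HY : Y ^ 2 = 4 * sg * u) by (unfold u; field; lra).
  unfold gauss_factor; rewrite <- exp_Ropp.
  replace (- Y ^ 2 * / (4 * sg)) with (- u) by (unfold u, Rdiv; ring).
  rewrite HY; reflexivity.
Qed.

Lemma gauss_factor_le_late (sg1 : R) : 0 < sg1 -> sg1 <= sg ->
  gauss_factor sg Y <= (1 + 4 * T) * (1 + / sg1) ^ 2 * / sqrt sg1.
Proof.
  intros Hsg1 Hle.
  rewrite gauss_factor_eq.
  assert (Hu : 0 <= u) by (unfold u; apply Rmult_le_pos; [nra | left; apply Rinv_0_lt_compat; lra]).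
  assert (He : 0 < exp u) by apply exp_pos.
  assert (A1 : / exp u * (1 + 4 * sg * u) <= 1 + 4 * T).
  { pose proof (exp_ineq1_le u).
    apply Rmult_le_reg_l with (exp u); auto; rewrite <- Rmult_assoc, Rinv_r by lra; nra. }
  assert (A2 : (1 + / sg) ^ 2 <= (1 + / sg1) ^ 2).
  { apply pow_incr; split; [pose proof (Rinv_0_lt_compat sg Hsg); lra |].
    apply Rplus_le_compat_l, Rinv_le_contravar; auto. }
  assert (A3 : / sqrt sg <= / sqrt sg1)
    by (apply Rinv_le_contravar; [apply sqrt_lt_R0 | apply sqrt_le_1_alt]; auto).
  assert (0 <= / exp u * (1 + 4 * sg * u)) by (apply Rmult_le_pos; [left; apply Rinv_0_lt_compat | nra]; auto).
  assert (0 <= (1 + / sg) ^ 2) by apply pow2_ge_0.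
  assert (0 < / sqrt sg) by (apply Rinv_0_lt_compat, sqrt_lt_R0; auto).
  apply Rmult_le_compat; try lra; [apply Rmult_le_pos; lra |].
  apply Rmult_le_compat; lra.
Qed.

Let exp_factor_le_far (m : R) : 0 < m -> m <= Y ^ 2 ->
  / exp u * (1 + 4 * sg * u) <= (27 + 1024 * T) * 64 * sg ^ 3 / m ^ 3.
Proof.
  intros Hm Hle.
  assert (Hum : m / (4 * sg) <= u)
    by (unfold u, Rdiv; apply Rmult_le_compat_r; [left; apply Rinv_0_lt_compat; lra | auto]).
  assert (Hm4 : 0 < m / (4 * sg)) by (apply Rdiv_lt_0_compat; lra).
  pose proof (exp_pos u).
  pose proof (Rinv_exp_mul_pow_le 3 u (Nat.lt_0_succ _) ltac:(lra)) as B3.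
  pose proof (Rinv_exp_mul_pow_le 4 u (Nat.lt_0_succ _) ltac:(lra)) as B4.
  simpl INR in B3, B4; ring_simplify (1 + 1 + 1) in B3; ring_simplify (1 + 1 + 1 + 1) in B4.
  assert (Hu3 : / exp u * (1 + 4 * sg * u) * u ^ 3 <= 27 + 1024 * T).
  { replace (/ exp u * (1 + 4 * sg * u) * u ^ 3) with (/ exp u * u ^ 3 + 4 * sg * (/ exp u * u ^ 4)) by ring.
    assert (0 <= / exp u * u ^ 4) by (apply Rmult_le_pos; [left; apply Rinv_0_lt_compat | apply pow_le]; lra).
    nra. }
  replace ((27 + 1024 * T) * 64 * sg ^ 3 / m ^ 3) with ((27 + 1024 * T) / (m / (4 * sg)) ^ 3)
    by (field; lra).
  apply Rmult_le_reg_r with ((m / (4 * sg)) ^ 3); [apply pow_lt; auto |].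
  replace ((27 + 1024 * T) / (m / (4 * sg)) ^ 3 * (m / (4 * sg)) ^ 3) with (27 + 1024 * T)
    by (field; lra).
  assert (0 <= / exp u * (1 + 4 * sg * u)) by (apply Rmult_le_pos; [left; apply Rinv_0_lt_compat | nra]; lra).
  assert ((m / (4 * sg)) ^ 3 <= u ^ 3) by (apply pow_incr; lra).
  assert (/ exp u * (1 + 4 * sg * u) * (m / (4 * sg)) ^ 3 <= / exp u * (1 + 4 * sg * u) * u ^ 3)
    by (apply Rmult_le_compat_l; auto).
  lra.
Qed.

Let time_factor_le : sg ^ 3 * ((1 + / sg) ^ 2 * / sqrt sg) <= (T + 1) ^ 3.
Proof.
  set (p := sqrt sg).
  assert (Hp : 0 < p) by (apply sqrt_lt_R0; auto).
  assert (Hpp : p * p = sg) by (apply sqrt_sqrt; lra).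
  replace (sg ^ 3 * ((1 + / sg) ^ 2 * / p)) with ((sg + 1) ^ 2 * p) by (rewrite <- Hpp; field; lra).
  assert ((sg + 1) ^ 2 <= (T + 1) ^ 2) by (apply pow_incr; lra).
  assert (p <= T + 1) by nra.
  replace ((T + 1) ^ 3) with ((T + 1) ^ 2 * (T + 1)) by ring.
  apply Rmult_le_compat; try lra; apply pow2_ge_0.
Qed.

Lemma gauss_factor_le_far (m : R) : 0 < m -> m <= Y ^ 2 ->
  gauss_factor sg Y <= (27 + 1024 * T) * 64 * (T + 1) ^ 3 / m ^ 3.
Proof.
  intros Hm Hle.
  rewrite gauss_factor_eq, Rmult_assoc.
  pose proof (sqrt_lt_R0 sg Hsg).
  assert (0 <= (1 + / sg) ^ 2 * / sqrt sg)
    by (apply Rmult_le_pos; [apply pow2_ge_0 | left; apply Rinv_0_lt_compat, sqrt_lt_R0; auto]).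
  assert (Hc : 0 <= (27 + 1024 * T) * 64 / m ^ 3)
    by (apply Rmult_le_pos; [lra | left; apply Rinv_0_lt_compat, pow_lt; auto]).
  apply Rle_trans with ((27 + 1024 * T) * 64 * sg ^ 3 / m ^ 3 * ((1 + / sg) ^ 2 * / sqrt sg));
    [apply Rmult_le_compat_r; [| apply exp_factor_le_far]; auto |].
  replace ((27 + 1024 * T) * 64 * sg ^ 3 / m ^ 3 * ((1 + / sg) ^ 2 * / sqrt sg))
    with ((27 + 1024 * T) * 64 / m ^ 3 * (sg ^ 3 * ((1 + / sg) ^ 2 * / sqrt sg))) by (field; lra).
  replace ((27 + 1024 * T) * 64 * (T + 1) ^ 3 / m ^ 3)
    with ((27 + 1024 * T) * 64 / m ^ 3 * (T + 1) ^ 3) by (field; lra).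
  apply Rmult_le_compat_l; auto.
Qed.

Lemma gauss_factor_le (sg1 m : R) : 0 < sg1 -> 0 < m -> sg1 <= sg \/ m <= Y ^ 2 ->
  gauss_factor sg Y <= gauss_factor_bound sg1 m T.
Proof.
  intros Hsg1 Hm Hcase; unfold gauss_factor_bound.
  destruct (gauss_factor_bound_nonneg sg1 m T Hsg1 Hm ltac:(lra)).
  destruct Hcase as [Hlate | Hfar].
  - pose proof (gauss_factor_le_late sg1 Hsg1 Hlate); lra.
  - pose proof (gauss_factor_le_far m Hm Hfar); lra.
Qed.

End GaussFactor.

Definition heat_amp (gamma t tau : R) : R := exp (- gamma * (t - tau)) * / sqrt (4 * PI * (t - tau)).
Definition heat_rate (t tau : R) : R := / (4 * (t - tau)).

Lemma is_derive_gauss (xi B y : R) :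
  is_derive (fun y => exp (- (y - xi) ^ 2 * B)) y (exp (- (y - xi) ^ 2 * B) * (- (2 * (y - xi)) * B)).
Proof.
  auto_derive; auto.
  replace (- ((y + - xi) * ((y + - xi) * 1)) * B) with (- (y - xi) ^ 2 * B) by ring; ring.
Qed.

Section Integrand.

Variables (gamma : R) (s v : R -> R) (t : R).

Definition T1_integrand (y tau : R) : R :=
  exp (- gamma * (t - tau)) * heatG y t (s tau) tau * v tau.

Definition T1_integrand_dy (y tau : R) : R :=
  heat_amp gamma t tau *
    (exp (- (y - s tau) ^ 2 * heat_rate t tau) * (- (2 * (y - s tau)) * heat_rate t tau)) * v tau.

Definition T1_integrand_dyy (y tau : R) : R :=
  heat_amp gamma t tau *
    (exp (- (y - s tau) ^ 2 * heat_rate t tau) *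
       ((2 * (y - s tau) * heat_rate t tau) ^ 2 - 2 * heat_rate t tau)) * v tau.

Lemma T1_integrand_eq (y tau : R) :
  T1_integrand y tau = heat_amp gamma t tau * (exp (- (y - s tau) ^ 2 * heat_rate t tau) * 1) * v tau.
Proof. unfold T1_integrand, heatG, heat_amp, heat_rate, Rdiv; ring. Qed.

Lemma is_derive_T1_integrand (y tau : R) :
  is_derive (fun y => T1_integrand y tau) y (T1_integrand_dy y tau).
Proof.
  apply (is_derive_ext (fun y => heat_amp gamma t tau * v tau * exp (- (y - s tau) ^ 2 * heat_rate t tau)));
    [intros z; rewrite T1_integrand_eq; apply Rminus_diag_uniq; ring |].
  unfold T1_integrand_dy.
  replace (heat_amp gamma t tau * (exp (- (y - s tau) ^ 2 * heat_rate t tau) *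
             (- (2 * (y - s tau)) * heat_rate t tau)) * v tau)
    with (scal (heat_amp gamma t tau * v tau) (exp (- (y - s tau) ^ 2 * heat_rate t tau) *
             (- (2 * (y - s tau)) * heat_rate t tau))) by (unfold scal; simpl; unfold mult; simpl; ring).
  apply is_derive_scal, is_derive_gauss.
Qed.

Lemma is_derive_T1_integrand_dy (y tau : R) :
  is_derive (fun y => T1_integrand_dy y tau) y (T1_integrand_dyy y tau).
Proof.
  unfold T1_integrand_dy, T1_integrand_dyy.
  set (B := heat_rate t tau); set (xi := s tau); set (K := heat_amp gamma t tau).
  apply (is_derive_ext (fun y => K * v tau * (exp (- (y - xi) ^ 2 * B) * (- (2 * (y - xi)) * B))));
    [intros; apply Rminus_diag_uniq; ring |].
  replace (K * (exp (- (y - xi) ^ 2 * B) * ((2 * (y - xi) * B) ^ 2 - 2 * B)) * v tau)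
    with (scal (K * v tau) (exp (- (y - xi) ^ 2 * B) * (- (2 * (y - xi)) * B) * (- (2 * (y - xi)) * B)
                            + exp (- (y - xi) ^ 2 * B) * (- 2 * B)))
    by (unfold scal; simpl; unfold mult; simpl; ring).
  apply is_derive_scal.
  apply (is_derive_mult (fun y => exp (- (y - xi) ^ 2 * B)) (fun y => - (2 * (y - xi)) * B));
    [apply is_derive_gauss | auto_derive; auto; ring | intros; unfold mult; simpl; ring].
Qed.

Lemma heat_amp_le (tau : R) : 0 <= gamma -> tau < t ->
  Rabs (heat_amp gamma t tau) <= / sqrt (t - tau).
Proof.
  intros Hg Htau; unfold heat_amp.
  assert (HPI : 3 < PI) by (pose proof PI2_3_2; lra).
  assert (Hs : 0 < sqrt (t - tau)) by (apply sqrt_lt_R0; lra).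
  assert (Hs4 : sqrt (t - tau) <= sqrt (4 * PI * (t - tau))) by (apply sqrt_le_1_alt; nra).
  assert (Hexp : exp (- gamma * (t - tau)) <= 1).
  { rewrite <- exp_0; destruct (Req_dec gamma 0) as [-> | Hg0].
    - right; f_equal; ring.
    - left; apply exp_increasing; nra. }
  assert (Hinv : / sqrt (4 * PI * (t - tau)) <= / sqrt (t - tau)) by (apply Rinv_le_contravar; lra).
  assert (0 < / sqrt (4 * PI * (t - tau))) by (apply Rinv_0_lt_compat; lra).
  pose proof (exp_pos (- gamma * (t - tau))).
  rewrite Rabs_mult, !Rabs_right by lra; nra.
Qed.

Lemma T1_integrand_shape_le (V0 sg1 m y tau Q : R) :
  0 <= gamma -> 0 <= tau <= t -> Rabs (v tau) <= V0 -> 0 < sg1 -> 0 < m ->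
  (tau < t -> sg1 <= t - tau \/ m <= (y - s tau) ^ 2) ->
  (tau < t -> Rabs Q <= (1 + (y - s tau) ^ 2) * (1 + / (t - tau)) ^ 2) ->
  Rabs (heat_amp gamma t tau * (exp (- (y - s tau) ^ 2 * heat_rate t tau) * Q) * v tau)
    <= V0 * gauss_factor_bound sg1 m t.
Proof.
  intros Hg Htau Hv Hsg1 Hm Hcase HQ.
  assert (HV0 : 0 <= V0) by (pose proof (Rabs_pos (v tau)); lra).
  destruct (Req_dec tau t) as [-> | Hne].
  { (* the junk value [/ sqrt 0 = 0] makes the integrand vanish at [tau = t] *)
    unfold heat_amp; rewrite Rminus_diag, !Rmult_0_r, sqrt_0, Rinv_0, !Rmult_0_r, !Rmult_0_l, Rabs_R0.
    destruct (gauss_factor_bound_nonneg sg1 m t Hsg1 Hm ltac:(lra)).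
    unfold gauss_factor_bound; apply Rmult_le_pos; lra. }
  assert (Hlt : tau < t) by lra.
  specialize (HQ Hlt).
  assert (Hbound : gauss_factor (t - tau) (y - s tau) <= gauss_factor_bound sg1 m t)
    by (apply gauss_factor_le; auto; lra).
  set (Ex := exp (- (y - s tau) ^ 2 * heat_rate t tau)).
  assert (HEx : 0 < Ex) by apply exp_pos.
  pose proof (heat_amp_le tau Hg Hlt) as HK.
  rewrite !Rabs_mult, (Rabs_right Ex) by lra.
  pose proof (Rabs_pos Q); pose proof (Rabs_pos (heat_amp gamma t tau)); pose proof (Rabs_pos (v tau)).
  assert (Hamp : Rabs (heat_amp gamma t tau) * (Ex * Rabs Q)
               <= / sqrt (t - tau) * (Ex * ((1 + (y - s tau) ^ 2) * (1 + / (t - tau)) ^ 2)))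
    by (apply Rmult_le_compat; nra).
  assert (Hshape : / sqrt (t - tau) * (Ex * ((1 + (y - s tau) ^ 2) * (1 + / (t - tau)) ^ 2))
               = gauss_factor (t - tau) (y - s tau)) by (unfold gauss_factor, Ex, heat_rate; ring).
  rewrite Rmult_comm; apply Rmult_le_compat; [lra | | lra | lra].
  apply Rmult_le_pos; [lra | apply Rmult_le_pos; lra].
Qed.

Lemma heat_rate_eq (tau : R) : tau < t -> heat_rate t tau = / 4 * / (t - tau).
Proof. intros; unfold heat_rate; apply Rinv_mult. Qed.

Lemma T1_integrands_le (V0 sg1 m y tau : R) :
  0 <= gamma -> 0 <= tau <= t -> Rabs (v tau) <= V0 -> 0 < sg1 -> 0 < m ->
  (tau < t -> sg1 <= t - tau \/ m <= (y - s tau) ^ 2) ->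
  Rabs (T1_integrand y tau) <= V0 * gauss_factor_bound sg1 m t /\
  Rabs (T1_integrand_dy y tau) <= V0 * gauss_factor_bound sg1 m t /\
  Rabs (T1_integrand_dyy y tau) <= V0 * gauss_factor_bound sg1 m t.
Proof.
  intros Hg Htau Hv Hsg1 Hm Hcase.
  assert (Hpoly : forall Q : R -> R -> R,
            (forall Y i, 0 <= i -> Rabs (Q Y i) <= (1 + Y ^ 2) * (1 + i) ^ 2) -> tau < t ->
            Rabs (Q (y - s tau) (/ (t - tau))) <= (1 + (y - s tau) ^ 2) * (1 + / (t - tau)) ^ 2).
  { intros Q HQ Hlt; apply HQ; left; apply Rinv_0_lt_compat; lra. }
  assert (HY : forall Y, Rabs Y <= 1 + Y ^ 2)
    by (intros Y; destruct (Rle_or_lt 0 Y); [rewrite Rabs_right | rewrite Rabs_left]; nra).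
  split; [| split].
  - rewrite T1_integrand_eq; apply T1_integrand_shape_le; auto; intros Hlt.
    apply (Hpoly (fun _ _ => 1)); auto; intros Y i Hi; rewrite Rabs_R1; nra.
  - apply T1_integrand_shape_le; auto; intros Hlt; rewrite heat_rate_eq by exact Hlt.
    apply (Hpoly (fun Y i => - (2 * Y) * (/ 4 * i))); auto; intros Y i Hi.
    replace (- (2 * Y) * (/ 4 * i)) with (- (Y * (i / 2))) by field.
    rewrite Rabs_Ropp, Rabs_mult, (Rabs_right (i / 2)) by lra.
    pose proof (HY Y); pose proof (Rabs_pos Y); apply Rmult_le_compat; nra.
  - apply T1_integrand_shape_le; auto; intros Hlt; rewrite heat_rate_eq by exact Hlt.
    apply (Hpoly (fun Y i => (2 * Y * (/ 4 * i)) ^ 2 - 2 * (/ 4 * i))); auto; intros Y i Hi.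
    replace ((2 * Y * (/ 4 * i)) ^ 2) with (Y ^ 2 * i ^ 2 / 4) by field.
    assert (0 <= Y ^ 2) by apply pow2_ge_0.
    assert (0 <= Y ^ 2 * i ^ 2) by (apply Rmult_le_pos; [auto | apply pow2_ge_0]).
    rewrite Rabs_le_between; split; nra.
Qed.

Lemma continuous_T1_integrands (y tau : R) : tau < t -> ex_derive s tau -> continuous v tau ->
  continuous (T1_integrand y) tau /\ continuous (T1_integrand_dy y) tau.
Proof.
  intros Htau Hs Hv.
  assert (HPI : 3 < PI) by (pose proof PI2_3_2; lra).
  assert (Hsq : 0 < sqrt (4 * PI * (t + - tau))) by (apply sqrt_lt_R0; nra).
  split.
  - apply (continuous_ext (fun r => heat_amp gamma t r * (exp (- (y - s r) ^ 2 * heat_rate t r) * 1) * v r));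
      [intros r; symmetry; apply T1_integrand_eq |].
    apply (continuous_mult (K := R_AbsRing)); [| exact Hv].
    apply (ex_derive_continuous (V := R_NormedModule)); unfold heat_amp, heat_rate.
    auto_derive; repeat split; auto; nra.
  - apply (continuous_mult (K := R_AbsRing)); [| exact Hv].
    apply (ex_derive_continuous (V := R_NormedModule)); unfold heat_amp, heat_rate.
    auto_derive; repeat split; auto; nra.
Qed.

End Integrand.

(** * The weighted pointwise estimate and its primitive *)

Definition pow32 (P : R) : R := P * sqrt P.

Lemma pow32_pos (P : R) : 0 < P -> 0 < pow32 P.
Proof. intros; apply Rmult_lt_0_compat; [| apply sqrt_lt_R0]; auto. Qed.

Lemma Rinv_pow32_le (P Q : R) : 0 < P -> P <= Q -> / pow32 Q <= / pow32 P.
Proof.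
  intros HP HPQ; apply Rinv_le_contravar; [apply pow32_pos; auto |].
  apply Rmult_le_compat; [lra | apply sqrt_pos | lra | apply sqrt_le_1_alt; auto].
Qed.

Lemma pow32_mult (P Q : R) : 0 <= P -> 0 <= Q -> pow32 (P * Q) = pow32 P * pow32 Q.
Proof. intros; unfold pow32; rewrite sqrt_mult by auto; ring. Qed.

Lemma exp_div_pow32_le (sg Y : R) : 0 < sg ->
  exp (- (Y ^ 2 / (8 * sg))) / pow32 sg <= / pow32 (sg + Y ^ 2 / 12).
Proof.
  intros Hsg.
  set (q := Y ^ 2 / (12 * sg)).
  assert (Hq : 0 <= q) by (unfold q; apply Rmult_le_pos; [nra | left; apply Rinv_0_lt_compat; lra]).
  replace (sg + Y ^ 2 / 12) with (sg * (1 + q)) by (unfold q; field; lra).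
  replace (Y ^ 2 / (8 * sg)) with (q + q / 2) by (unfold q; field; lra).
  rewrite pow32_mult, Ropp_plus_distr, exp_plus, !exp_Ropp by lra.
  (* (1 + q)^(3/2) <= (e^q)^(3/2) = e^q e^(q/2) *)
  assert (Hsqrt : sqrt (exp q) = exp (q / 2)).
  { rewrite <- sqrt_square with (exp (q / 2)) by (left; apply exp_pos).
    f_equal; rewrite <- exp_plus; f_equal; field. }
  assert (Hpow : pow32 (1 + q) <= exp q * exp (q / 2)).
  { unfold pow32; rewrite <- Hsqrt.
    pose proof (exp_ineq1_le q).
    apply Rmult_le_compat; [lra | apply sqrt_pos | lra | apply sqrt_le_1_alt; lra]. }
  pose proof (pow32_pos sg Hsg); pose proof (pow32_pos (1 + q) ltac:(lra)).
  pose proof (exp_pos q); pose proof (exp_pos (q / 2)).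
  replace (/ exp q * / exp (q / 2) / pow32 sg) with (/ (pow32 sg * (exp q * exp (q / 2))))
    by (field; repeat split; lra).
  apply Rinv_le_contravar; [apply Rmult_lt_0_compat; auto |].
  apply Rmult_le_compat_l; lra.
Qed.

Lemma weight_le_half_gauss (alpha gamma v0 V0 z d sg : R) :
  0 < v0 -> v0 <= V0 -> 0 <= alpha ->
  alpha <= v0 / 8 -> alpha <= gamma / (2 * V0) -> 0 < sg -> v0 * sg <= d -> d <= V0 * sg ->
  alpha * Rabs z - gamma * sg - (z - d) ^ 2 / (4 * sg) <= - ((z - d) ^ 2 / (8 * sg)).
Proof.
  intros Hv0 HV0 Ha Ha1 Ha2 Hsg Hd1 Hd2.
  assert (Hd : 0 < d) by nra.
  assert (Hg : 2 * alpha * d <= gamma * sg).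
  { apply Rle_trans with (2 * alpha * (V0 * sg)); [nra |].
    replace gamma with (gamma / (2 * V0) * (2 * V0)) by (field; lra).
    assert (0 <= V0 * sg) by nra.
    assert (alpha * (V0 * sg) <= gamma / (2 * V0) * (V0 * sg)) by (apply Rmult_le_compat_r; lra).
    lra. }
  assert (Hq : (z - d) ^ 2 / (8 * sg) * (8 * sg) = (z - d) ^ 2) by (field; lra).
  set (Q := (z - d) ^ 2 / (8 * sg)) in *.
  assert (HQ : 0 <= Q) by (unfold Q; apply Rmult_le_pos; [apply pow2_ge_0 | left; apply Rinv_0_lt_compat; lra]).
  replace ((z - d) ^ 2 / (4 * sg)) with (2 * Q) by (unfold Q; field; lra).
  (* the part of alpha |z| not paid by gamma sg is paid by half of the Gaussian exponent *)
  assert (Hpay : forall w, 0 <= w -> v0 * sg * w <= (z - d) ^ 2 -> alpha * w <= Q).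
  { intros w Hw Hvw; apply Rmult_le_reg_r with (8 * sg); [lra |]; rewrite Hq.
    apply Rle_trans with (v0 * sg * w); [| exact Hvw].
    assert (0 <= sg * w) by nra; nra. }
  destruct (Rle_or_lt 0 z) as [Hz | Hz].
  - rewrite Rabs_right by lra.
    destruct (Rle_or_lt z (2 * d)) as [Hzd | Hzd]; [nra |].
    pose proof (Hpay (z - 2 * d) ltac:(lra) ltac:(nra)); nra.
  - rewrite Rabs_left by lra.
    pose proof (Hpay (- z) ltac:(lra) ltac:(nra)); nra.
Qed.

Definition rho (V0 r : R) : R := / (sqrt r * pow32 (/ V0 + r / 12)).

Lemma rho_eq (V0 r : R) : 0 < V0 -> 0 < r -> rho V0 r = r / pow32 (r / V0 + r ^ 2 / 12).
Proof.
  intros HV Hr; unfold rho.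
  assert (HQ : 0 < / V0 + r / 12) by (pose proof (Rinv_0_lt_compat V0 HV); lra).
  replace (r / V0 + r ^ 2 / 12) with (r * (/ V0 + r / 12)) by (field; lra).
  rewrite pow32_mult by lra; unfold pow32 at 2.
  pose proof (sqrt_lt_R0 r Hr); pose proof (pow32_pos _ HQ).
  field; split; lra.
Qed.

Definition dens (z V0 c d : R) : R := Rabs z / pow32 (d / V0 + z ^ 2 / 48) + rho V0 (Rabs (d - c)).

Lemma abs_div_pow32_le_dens (z V0 d : R) : 0 < V0 -> z <> 0 -> 0 < d -> d <> Rmax z 0 ->
  Rabs (z - d) / pow32 (d / V0 + (z - d) ^ 2 / 12) <= dens z V0 (Rmax z 0) d.
Proof.
  intros HV Hz Hd Hdc; unfold dens.
  assert (HdV : 0 < d / V0) by (apply Rdiv_lt_0_compat; lra).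
  assert (Hr : 0 < Rabs (d - Rmax z 0)) by (apply Rabs_pos_lt; lra).
  assert (Hrho : 0 < rho V0 (Rabs (d - Rmax z 0))).
  { apply Rinv_0_lt_compat, Rmult_lt_0_compat; [apply sqrt_lt_R0; auto | apply pow32_pos].
    pose proof (Rinv_0_lt_compat V0 HV); lra. }
  assert (Hz2 : 0 < z ^ 2) by (apply pow2_gt_0; auto).
  assert (Htail : 0 <= Rabs z / pow32 (d / V0 + z ^ 2 / 48))
    by (left; apply Rdiv_lt_0_compat; [apply Rabs_pos_lt; auto | apply pow32_pos; lra]).
  assert (Hdiv : forall a b P Q, 0 <= a <= b -> 0 < P <= Q -> a / pow32 Q <= b / pow32 P).
  { intros a b P Q Hab HPQ; unfold Rdiv.
    apply Rmult_le_compat; [lra | left; apply Rinv_0_lt_compat, pow32_pos; lra | lra |].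
    apply Rinv_pow32_le; lra. }
  destruct (Rle_or_lt 0 z) as [Hz0 | Hz0].
  - rewrite Rmax_left in * by lra; rewrite (Rabs_right z) in * by lra.
    destruct (Rle_or_lt (z / 2) d) as [Hzd | Hzd].
    + (* d is near the interface point z: the rho term dominates *)
      rewrite rho_eq, (Rabs_minus_sym z d), <- (pow2_abs (z - d)), (Rabs_minus_sym z d) by auto.
      assert (Hrd : Rabs (d - z) <= d) by (apply Rabs_le; lra).
      assert (Rabs (d - z) / pow32 (d / V0 + Rabs (d - z) ^ 2 / 12)
              <= Rabs (d - z) / pow32 (Rabs (d - z) / V0 + Rabs (d - z) ^ 2 / 12)).
      { apply Hdiv; [lra | split].
        - pose proof (Rdiv_lt_0_compat _ _ Hr HV); nra.
        - apply Rplus_le_compat_r, Rmult_le_compat_r; [left; apply Rinv_0_lt_compat |]; lra. }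
      lra.
    + assert (Rabs (z - d) / pow32 (d / V0 + (z - d) ^ 2 / 12) <= z / pow32 (d / V0 + z ^ 2 / 48))
        by (rewrite Rabs_right by lra; apply Hdiv; nra).
      lra.
  - rewrite Rmax_right, Rminus_0_r, (Rabs_right d), (Rabs_left z), (Rabs_left (z - d)) in * by lra.
    rewrite rho_eq by auto.
    replace (- (z - d)) with (- z + d) by ring; unfold Rdiv at 1; rewrite Rmult_plus_distr_r.
    apply Rplus_le_compat; apply Hdiv; nra.
Qed.

Definition dens_tail_prim (z V0 d : R) : R := - (2 * Rabs z * V0) / sqrt (d / V0 + z ^ 2 / 48).
Definition rho_prim (V0 r : R) : R := 2 * V0 * sqrt r / sqrt (/ V0 + r / 12).
Definition rho_prim_at (V0 c d : R) : R :=
  if Rle_dec c d then rho_prim V0 (d - c) else - rho_prim V0 (c - d).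
Definition dens_prim (z V0 c d : R) : R := dens_tail_prim z V0 d + rho_prim_at V0 c d.

Lemma is_derive_dens_tail_prim (z V0 d : R) : 0 < V0 -> 0 < d / V0 + z ^ 2 / 48 ->
  is_derive (dens_tail_prim z V0) d (Rabs z / pow32 (d / V0 + z ^ 2 / 48)).
Proof.
  intros HV HP; unfold dens_tail_prim, pow32.
  assert (0 < sqrt (d / V0 + z ^ 2 / 48)) by (apply sqrt_lt_R0; auto).
  auto_derive; replace (d * / V0 + z * (z * 1) / 48) with (d / V0 + z ^ 2 / 48) by (unfold Rdiv; ring);
    [repeat split; lra |].
  set (P := d / V0 + z ^ 2 / 48) in *.
  assert (Hs : sqrt P * sqrt P = P) by (apply sqrt_sqrt; lra).
  rewrite Hs; field; repeat split; lra.
Qed.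

Lemma is_derive_rho_prim (V0 r : R) : 0 < V0 -> 0 < r -> is_derive (rho_prim V0) r (rho V0 r).
Proof.
  intros HV Hr; unfold rho_prim, rho, pow32.
  assert (HQ : 0 < / V0 + r / 12) by (pose proof (Rinv_0_lt_compat V0 HV); lra).
  pose proof (sqrt_lt_R0 _ HQ); pose proof (sqrt_lt_R0 _ Hr).
  auto_derive; replace (r * / 12) with (r / 12) by (unfold Rdiv; ring); [repeat split; lra |].
  assert (Hr2 : sqrt r * sqrt r = r) by (apply sqrt_sqrt; lra).
  assert (HQ2 : sqrt (/ V0 + r / 12) * sqrt (/ V0 + r / 12) = / V0 + r / 12) by (apply sqrt_sqrt; lra).
  set (Q := / V0 + r / 12) in *; set (sq := sqrt Q) in *; set (sr := sqrt r) in *.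
  rewrite HQ2.
  apply Rmult_eq_reg_r with (sr * (Q * sq)); [| apply Rmult_integral_contrapositive; split; nra].
  rewrite Rinv_l by (apply Rmult_integral_contrapositive; split; nra).
  field_simplify; [| lra ..].
  replace (sr ^ 2) with r by (rewrite <- Hr2; ring).
  unfold Q; field; lra.
Qed.

Lemma is_derive_rho_prim_at (V0 c d : R) : 0 < V0 -> d <> c ->
  is_derive (rho_prim_at V0 c) d (rho V0 (Rabs (d - c))).
Proof.
  intros HV Hdc.
  destruct (Rlt_or_le c d) as [Hlt | Hle].
  - apply is_derive_ext_loc with (fun y => rho_prim V0 (y - c)).
    + exists (mkposreal (d - c) ltac:(lra)); intros y Hy.
      change (Rabs (y - d) < d - c) in Hy; apply Rabs_def2 in Hy.
      unfold rho_prim_at; destruct (Rle_dec c y); [reflexivity | lra].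
    + rewrite Rabs_right by lra.
      replace (rho V0 (d - c)) with (scal 1 (rho V0 (d - c))) by (unfold scal; simpl; unfold mult; simpl; ring).
      apply (is_derive_comp (rho_prim V0) (fun y => y - c)).
      * apply is_derive_rho_prim; lra.
      * auto_derive; auto; ring.
  - apply is_derive_ext_loc with (fun y => - rho_prim V0 (c - y)).
    + exists (mkposreal (c - d) ltac:(lra)); intros y Hy.
      change (Rabs (y - d) < c - d) in Hy; apply Rabs_def2 in Hy.
      unfold rho_prim_at; destruct (Rle_dec c y); [lra | reflexivity].
    + rewrite Rabs_left, Ropp_minus_distr by lra.
      replace (rho V0 (c - d)) with (opp (scal (-1) (rho V0 (c - d))))
        by (unfold opp, scal; simpl; unfold mult; simpl; ring).
      apply (is_derive_opp (fun y => rho_prim V0 (c - y))).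
      apply (is_derive_comp (rho_prim V0) (fun y => c - y)).
      * apply is_derive_rho_prim; lra.
      * auto_derive; auto; ring.
Qed.

Lemma rho_prim_bounds (V0 r : R) : 0 < V0 -> 0 <= r ->
  0 <= rho_prim V0 r <= 2 * V0 * sqrt 12 /\ rho_prim V0 r <= 2 * V0 * sqrt V0 * sqrt r.
Proof.
  intros HV Hr; unfold rho_prim.
  assert (HQ : 0 < / V0 + r / 12) by (pose proof (Rinv_0_lt_compat V0 HV); lra).
  assert (Hsq : 0 < sqrt (/ V0 + r / 12)) by (apply sqrt_lt_R0; auto).
  pose proof (sqrt_pos r); pose proof (sqrt_pos V0).
  assert (Hle : forall K, sqrt r <= K * sqrt (/ V0 + r / 12) -> 2 * V0 * sqrt r / sqrt (/ V0 + r / 12) <= 2 * V0 * K).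
  { intros K HK; unfold Rdiv.
    apply Rmult_le_reg_r with (sqrt (/ V0 + r / 12)); auto.
    rewrite Rmult_assoc, Rinv_l by lra; nra. }
  split; [split |].
  - apply Rmult_le_pos; [nra | left; apply Rinv_0_lt_compat; auto].
  - apply Hle; rewrite <- sqrt_mult by lra; apply sqrt_le_1_alt.
    pose proof (Rinv_0_lt_compat V0 HV); lra.
  - replace (2 * V0 * sqrt V0 * sqrt r) with (2 * V0 * (sqrt V0 * sqrt r)) by ring.
    apply Hle.
    assert (H1 : 1 <= sqrt V0 * sqrt (/ V0 + r / 12)).
    { rewrite <- sqrt_mult, <- sqrt_1 by lra; apply sqrt_le_1_alt.
      rewrite Rmult_plus_distr_l, Rinv_r by lra.
      assert (0 <= V0 * (r / 12)) by (apply Rmult_le_pos; lra); lra. }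
    nra.
Qed.

Lemma Rabs_rho_prim_at_le (V0 c d : R) : 0 < V0 ->
  Rabs (rho_prim_at V0 c d) <= 2 * V0 * sqrt 12 /\
  Rabs (rho_prim_at V0 c d) <= 2 * V0 * sqrt V0 * sqrt (Rabs (d - c)).
Proof.
  intros HV; unfold rho_prim_at; destruct (Rle_dec c d).
  - rewrite Rabs_right, (Rabs_right (d - c)) by (try apply Rle_ge, rho_prim_bounds; lra).
    destruct (rho_prim_bounds V0 (d - c) HV ltac:(lra)); lra.
  - rewrite Rabs_Ropp, Rabs_right, Rabs_left, Ropp_minus_distr by (try apply Rle_ge, rho_prim_bounds; lra).
    destruct (rho_prim_bounds V0 (c - d) HV ltac:(lra)); lra.
Qed.

Lemma continuous_rho_prim_at (V0 c d : R) : 0 < V0 -> continuous (rho_prim_at V0 c) d.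
Proof.
  intros HV.
  destruct (Req_dec d c) as [-> | Hne].
  - (* squeeze between -K sqrt|d - c| and K sqrt|d - c| *)
    set (K := 2 * V0 * sqrt V0).
    assert (E0 : rho_prim_at V0 c c = 0).
    { unfold rho_prim_at, rho_prim; destruct (Rle_dec c c); [| lra].
      rewrite Rminus_diag, sqrt_0; unfold Rdiv; ring. }
    assert (Hlim : forall k, continuous (fun y => k * sqrt (Rabs (y - c))) c).
    { intros k; apply (continuous_mult (K := R_AbsRing) (fun _ => k)); [apply continuous_const |].
      apply continuous_sqrt_comp, continuous_Rabs_comp.
      apply (ex_derive_continuous (V := R_NormedModule) (fun y => y - c)); auto_derive; auto. }
    unfold continuous; rewrite E0.
    apply (filterlim_le_le (F := locally c) (fun y => - K * sqrt (Rabs (y - c))) (rho_prim_at V0 c)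
             (fun y => K * sqrt (Rabs (y - c))) 0).

    + apply filter_forall; intros y; destruct (Rabs_rho_prim_at_le V0 c y HV) as [_ Hb].
      apply Rabs_le_between in Hb; unfold K in *; lra.
    + pose proof (Hlim (- K)) as Hm; unfold continuous in Hm.
      rewrite Rminus_diag, Rabs_R0, sqrt_0, Rmult_0_r in Hm; exact Hm.
    + pose proof (Hlim K) as Hm; unfold continuous in Hm.
      rewrite Rminus_diag, Rabs_R0, sqrt_0, Rmult_0_r in Hm; exact Hm.
  - apply (ex_derive_continuous (V := R_NormedModule)); eexists; apply is_derive_rho_prim_at; auto.
Qed.

Lemma is_derive_dens_prim (z V0 c d : R) : 0 < V0 -> 0 <= d -> z <> 0 -> d <> c ->
  is_derive (dens_prim z V0 c) d (dens z V0 c d).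
Proof.
  intros HV Hd Hz Hdc; unfold dens_prim, dens.
  assert (0 <= d / V0) by (apply Rmult_le_pos; [lra | left; apply Rinv_0_lt_compat; lra]).
  assert (0 < z ^ 2) by (apply pow2_gt_0; auto).
  apply (is_derive_plus (K := R_AbsRing) (V := R_NormedModule));
    [apply is_derive_dens_tail_prim | apply is_derive_rho_prim_at]; auto; lra.
Qed.

Lemma continuous_dens_prim (z V0 c d : R) : 0 < V0 -> 0 <= d -> z <> 0 ->
  continuous (dens_prim z V0 c) d.
Proof.
  intros HV Hd Hz; unfold dens_prim.
  assert (0 <= d / V0) by (apply Rmult_le_pos; [lra | left; apply Rinv_0_lt_compat; lra]).
  assert (0 < z ^ 2) by (apply pow2_gt_0; auto).
  apply (continuous_plus (V := R_NormedModule)); [| apply continuous_rho_prim_at; auto].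
  apply (ex_derive_continuous (V := R_NormedModule)); eexists; apply is_derive_dens_tail_prim; auto; lra.
Qed.

Lemma dens_prim_increase_le (z V0 c D : R) : 0 < V0 -> z <> 0 -> 0 <= D ->
  dens_prim z V0 c D - dens_prim z V0 c 0 <= 2 * V0 * sqrt 48 + 4 * V0 * sqrt 12.
Proof.
  intros HV Hz HD; unfold dens_prim.
  assert (Htail_D : dens_tail_prim z V0 D <= 0).
  { unfold dens_tail_prim, Rdiv; pose proof (Rabs_pos z).
    assert (0 <= / sqrt (D / V0 + z ^ 2 / 48)).
    { destruct (Req_dec (sqrt (D / V0 + z ^ 2 / 48)) 0) as [E | E]; [rewrite E, Rinv_0; lra |].
      pose proof (sqrt_pos (D / V0 + z ^ 2 / 48)); left; apply Rinv_0_lt_compat; lra. }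
    assert (0 <= 2 * Rabs z * V0) by nra; nra. }
  assert (Htail_0 : dens_tail_prim z V0 0 = - (2 * V0 * sqrt 48)).
  { unfold dens_tail_prim.
    replace (0 / V0 + z ^ 2 / 48) with (z ^ 2 * / 48) by (unfold Rdiv; ring).
    rewrite sqrt_mult, <- Rsqr_pow2, sqrt_Rsqr_abs, sqrt_inv
      by (try apply pow2_ge_0; left; apply Rinv_0_lt_compat; lra).
    pose proof (sqrt_lt_R0 48 ltac:(lra)); pose proof (Rabs_pos_lt z Hz).
    field; lra. }
  destruct (Rabs_rho_prim_at_le V0 c D HV) as [HD' _]; destruct (Rabs_rho_prim_at_le V0 c 0 HV) as [H0 _].
  apply Rabs_le_between in HD'; apply Rabs_le_between in H0; lra.
Qed.

Lemma dens_total_le (V0 : R) : 0 < V0 ->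
  / (4 * sqrt PI) * (2 * V0 * sqrt 48 + 4 * V0 * sqrt 12) <= 6 * V0.
Proof.
  intros HV.
  assert (HPI : 3 < PI) by (pose proof PI2_3_2; lra).
  assert (Hsqrt_le : forall a b, 0 <= b -> a <= b ^ 2 -> sqrt a <= b)
    by (intros a b Hb Hab; rewrite <- (sqrt_pow2 b Hb); apply sqrt_le_1_alt, Hab).
  assert (H48 : sqrt 48 <= 7) by (apply Hsqrt_le; lra).
  assert (H12 : sqrt 12 <= 7 / 2) by (apply Hsqrt_le; lra).
  assert (HsPI : 17 / 10 <= sqrt PI).
  { rewrite <- (sqrt_pow2 (17 / 10)) by lra; apply sqrt_le_1_alt; lra. }
  pose proof (sqrt_pos 48); pose proof (sqrt_pos 12).
  apply Rmult_le_reg_l with (4 * sqrt PI); [lra |].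
  rewrite <- Rmult_assoc, Rinv_r by lra; nra.
Qed.

Lemma Rabs_heat_dy_eq (gamma Y sg w : R) : 0 < sg ->
  Rabs (exp (- gamma * sg) * / sqrt (4 * PI * sg) * (exp (- Y ^ 2 * / (4 * sg)) * (- (2 * Y) * / (4 * sg))) * w)
  = / (4 * sqrt PI) * Rabs w * (exp (- gamma * sg) * exp (- (Y ^ 2 / (4 * sg))) * Rabs Y / pow32 sg).
Proof.
  intros Hsg.
  assert (HPI : 0 < PI) by (pose proof PI2_3_2; lra).
  assert (HsPI : 0 < sqrt PI) by (apply sqrt_lt_R0; auto).
  assert (Hssg : 0 < sqrt sg) by (apply sqrt_lt_R0; auto).
  assert (E4 : sqrt (4 * PI * sg) = 2 * sqrt PI * sqrt sg).
  { rewrite !sqrt_mult by lra; replace 4 with (2 * 2) by ring; rewrite sqrt_square by lra; ring. }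
  rewrite E4, !Rabs_mult, !(Rabs_right (exp _)), !(Rabs_right (/ _)), Rabs_Ropp, Rabs_mult,
    (Rabs_right 2) by (try (left; apply exp_pos); try (left; apply Rinv_0_lt_compat); nra).
  unfold pow32; replace (- Y ^ 2 * / (4 * sg)) with (- (Y ^ 2 / (4 * sg))) by (unfold Rdiv; ring).
  field; repeat split; lra.
Qed.

Lemma weighted_heat_dy_le (gamma v0 V0 alpha z d sg w : R) :
  0 < v0 -> v0 <= V0 -> 0 <= alpha -> alpha <= v0 / 8 -> alpha <= gamma / (2 * V0) ->
  0 < sg -> v0 * sg <= d -> d <= V0 * sg -> z <> 0 -> d <> Rmax z 0 ->
  exp (alpha * Rabs z) * Rabs (exp (- gamma * sg) * / sqrt (4 * PI * sg) *
     (exp (- (z - d) ^ 2 * / (4 * sg)) * (- (2 * (z - d)) * / (4 * sg))) * w)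
  <= / (4 * sqrt PI) * Rabs w * dens z V0 (Rmax z 0) d.
Proof.
  intros Hv0 HV Ha Ha1 Ha2 Hsg Hd1 Hd2 Hz Hdc.
  assert (Hd : 0 < d) by nra.
  rewrite Rabs_heat_dy_eq by exact Hsg.
  set (Y := z - d); set (A := exp (- gamma * sg) * exp (- (Y ^ 2 / (4 * sg)))).
  assert (HA : exp (alpha * Rabs z) * A <= exp (- (Y ^ 2 / (8 * sg)))).
  { unfold A; rewrite <- !exp_plus.
    pose proof (weight_le_half_gauss alpha gamma v0 V0 z d sg Hv0 HV Ha Ha1 Ha2 Hsg Hd1 Hd2) as Hw.
    fold Y in Hw.
    destruct (Rle_lt_or_eq_dec _ _ Hw) as [Hl | He]; [left; apply exp_increasing; lra |].
    right; f_equal; rewrite <- He; ring. }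
  assert (Hgauss : exp (- (Y ^ 2 / (8 * sg))) / pow32 sg <= / pow32 (d / V0 + Y ^ 2 / 12)).
  { eapply Rle_trans; [apply exp_div_pow32_le; exact Hsg |].
    apply Rinv_pow32_le; [pose proof (Rdiv_lt_0_compat d V0 Hd ltac:(lra)); nra |].
    apply Rplus_le_compat_r; apply Rmult_le_reg_r with V0; [lra |].
    unfold Rdiv; rewrite Rmult_assoc, Rinv_l by lra; lra. }
  pose proof (abs_div_pow32_le_dens z V0 d ltac:(lra) Hz Hd Hdc) as Hdens; fold Y in Hdens.
  assert (HA0 : 0 <= A) by (unfold A; left; apply Rmult_lt_0_compat; apply exp_pos).
  pose proof (pow32_pos sg Hsg); pose proof (Rabs_pos Y); pose proof (Rabs_pos w).
  assert (Hpt : exp (alpha * Rabs z) * (A * Rabs Y / pow32 sg) <= dens z V0 (Rmax z 0) d).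
  { replace (exp (alpha * Rabs z) * (A * Rabs Y / pow32 sg))
      with (Rabs Y * (exp (alpha * Rabs z) * A / pow32 sg)) by (field; lra).
    eapply Rle_trans; [| exact Hdens]; unfold Rdiv at 2; apply Rmult_le_compat_l; [lra |].
    eapply Rle_trans; [| exact Hgauss]; unfold Rdiv.
    apply Rmult_le_compat_r; [left; apply Rinv_0_lt_compat; lra | exact HA]. }
  replace (exp (alpha * Rabs z) * (/ (4 * sqrt PI) * Rabs w * (A * Rabs Y / pow32 sg)))
    with (/ (4 * sqrt PI) * Rabs w * (exp (alpha * Rabs z) * (A * Rabs Y / pow32 sg))) by ring.
  apply Rmult_le_compat_l; [| exact Hpt].
  pose proof PI2_3_2; pose proof (sqrt_lt_R0 PI ltac:(lra)).
  apply Rmult_le_pos; [left; apply Rinv_0_lt_compat |]; lra.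
Qed.

Section Solution.

Variables (gamma v0 V0 : R) (s v : R -> R) (t x : R).

Hypotheses (Hgamma : 0 <= gamma) (Hv0 : 0 < v0) (HV0 : v0 <= V0).
Hypotheses (Hs_right : filterlim s (at_right 0) (locally (s 0)))
           (Hds : forall r, 0 < r -> is_derive s r (v r))
           (Hv_cont : forall r, 0 < r -> continuous v r)
           (Hv : forall r, 0 <= r -> - V0 <= v r <= - v0).
Hypotheses (Ht : 0 < t) (Hx : x <> s t).

Let displacement r1 r2 : 0 <= r1 <= r2 -> v0 * (r2 - r1) <= s r1 - s r2 <= V0 * (r2 - r1).
Proof.
  intros Hr; apply (displacement_bounds s v 0 v0 V0); auto.
  intros r' Hr'; apply Hv; lra.
Qed.

Let Habs_v r : 0 <= r -> Rabs (v r) <= V0.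
Proof. intros Hr; specialize (Hv r Hr); rewrite Rabs_left by lra; lra. Qed.

Let sep_time := Rabs (x - s t) / (4 * V0).
Let sep_space := (x - s t) ^ 2 / 4.
Let bound := V0 * gauss_factor_bound sep_time sep_space t.

Let Hz : 0 < Rabs (x - s t).
Proof. apply Rabs_pos_lt; lra. Qed.

Let Hsep_time : 0 < sep_time.
Proof. unfold sep_time; apply Rdiv_lt_0_compat; lra. Qed.

Let Hsep_space : 0 < sep_space.
Proof. unfold sep_space; rewrite <- pow2_abs; pose proof (pow_lt _ 2 Hz); lra. Qed.

(* If [t - r] is small, the interface has moved by less than [|x - s t| / 4] since time [r]. *)
Lemma time_or_space_separated (y r : R) : Rabs (y - x) <= Rabs (x - s t) / 4 -> 0 <= r < t ->
  sep_time <= t - r \/ sep_space <= (y - s r) ^ 2.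
Proof.
  intros Hy Hr.
  destruct (Rle_or_lt sep_time (t - r)) as [Hl | Hl]; [left; exact Hl | right].
  destruct (displacement r t ltac:(lra)) as [Hd0 Hd1].
  assert (Hd : s r - s t < Rabs (x - s t) / 4).
  { assert (V0 * (t - r) < V0 * sep_time) by (apply Rmult_lt_compat_l; lra).
    assert (V0 * sep_time = Rabs (x - s t) / 4) by (unfold sep_time; field; lra); lra. }
  assert (Htri : Rabs (x - s t) <= Rabs (y - s r) + Rabs (y - x) + (s r - s t)).
  { replace (x - s t) with ((y - s r) - (y - x) + (s r - s t)) by ring.
    eapply Rle_trans; [apply Rabs_triang |]; rewrite (Rabs_right (s r - s t)) by nra.
    apply Rplus_le_compat_r; eapply Rle_trans; [apply Rabs_triang |]; rewrite Rabs_Ropp; lra. }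
  unfold sep_space; rewrite <- (pow2_abs (y - s r)), <- (pow2_abs (x - s t)).
  assert ((Rabs (x - s t) / 2) ^ 2 <= Rabs (y - s r) ^ 2) by (apply pow_incr; lra).
  replace ((Rabs (x - s t) / 2) ^ 2) with (Rabs (x - s t) ^ 2 / 4) in * by field; lra.
Qed.

Lemma T1_integrands_near_le (y r : R) : Rabs (y - x) <= Rabs (x - s t) / 4 -> 0 <= r <= t ->
  Rabs (T1_integrand gamma s v t y r) <= bound /\
  Rabs (T1_integrand_dy gamma s v t y r) <= bound /\
  Rabs (T1_integrand_dyy gamma s v t y r) <= bound.
Proof.
  intros Hy Hr; apply T1_integrands_le; [lra | exact Hr | apply Habs_v; lra | exact Hsep_time | exact Hsep_space |].
  intros Hrt; apply time_or_space_separated; auto; lra.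
Qed.

Let continuous_integrands (y r : R) : 0 < r < t ->
  continuous (T1_integrand gamma s v t y) r /\ continuous (T1_integrand_dy gamma s v t y) r.
Proof.
  intros Hr; apply continuous_T1_integrands; [lra | eexists; apply Hds; lra | apply Hv_cont; lra].
Qed.

Lemma is_derive_T1 :
  is_derive (fun y => T1 gamma s v t y) x (- RInt (T1_integrand_dy gamma s v t x) 0 t).
Proof.
  assert (Hx0 : Rabs (x - x) <= Rabs (x - s t) / 4) by (rewrite Rminus_diag, Rabs_R0; lra).
  apply (is_derive_opp (K := R_AbsRing) (V := R_NormedModule) (fun y => RInt (T1_integrand gamma s v t y) 0 t)).
  apply (is_derive_RInt_param_dominated _ _ (T1_integrand_dyy gamma s v t) x 0 t (Rabs (x - s t) / 4) bound);
    try lra.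
  - apply is_derive_T1_integrand.
  - apply is_derive_T1_integrand_dy.
  - intros y r Hy Hr; apply (T1_integrands_near_le y r Hy Hr).
  - intros y Hy; apply (ex_RInt_of_bounded_continuous _ 0 t bound); try lra.
    + intros r Hr; apply (T1_integrands_near_le y r Hy Hr).
    + intros r Hr; apply (continuous_integrands y r Hr).
  - apply (ex_RInt_of_bounded_continuous _ 0 t bound); try lra.
    + intros r Hr; apply (T1_integrands_near_le x r Hx0 Hr).
    + intros r Hr; apply (continuous_integrands x r Hr).
Qed.

Let c := Rmax (x - s t) 0.

Let Hcont_s r : 0 < r -> continuous s r.
Proof. intros Hr; apply (ex_derive_continuous (V := R_NormedModule)); eexists; apply Hds, Hr. Qed.

Let s_injective r1 r2 : 0 <= r1 <= t -> 0 <= r2 <= t -> s r1 = s r2 -> r1 = r2.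
Proof.
  intros Hr1 Hr2 E.
  destruct (Rtotal_order r1 r2) as [Hlt | [Heq | Hgt]]; auto; exfalso.
  - pose proof (displacement r1 r2 ltac:(lra)); nra.
  - pose proof (displacement r2 r1 ltac:(lra)); nra.
Qed.

(* a primitive, as a function of the interface position, of the bound on [T1_integrand_dy] *)
Let prim (k e : R) : R := k * - dens_prim (x - s t) V0 c (e - s t).

Let continuous_prim k e : s t <= e -> continuous (prim k) e.
Proof.
  intros He; unfold prim.
  apply (continuous_mult (K := R_AbsRing) (fun _ => k)); [apply continuous_const |].
  apply (continuous_opp (V := R_NormedModule) (fun e => dens_prim (x - s t) V0 c (e - s t))).
  apply (continuous_comp (fun e => e - s t) (dens_prim (x - s t) V0 c)).
  - apply (ex_derive_continuous (V := R_NormedModule) (fun e => e - s t)); auto_derive; auto.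
  - apply continuous_dens_prim; lra.
Qed.

Let is_derive_prim_comp k r : 0 < r < t -> s r - s t <> c ->
  is_derive (fun r => prim k (s r)) r (v r * (k * - dens (x - s t) V0 c (s r - s t))).
Proof.
  intros Hr Hdc.
  destruct (displacement r t ltac:(lra)).
  apply (is_derive_comp (prim k) s); [| apply Hds; lra].
  unfold prim; replace (k * - dens (x - s t) V0 c (s r - s t))
    with (scal k (opp (scal 1 (dens (x - s t) V0 c (s r - s t)))))
    by (unfold scal, opp; simpl; unfold mult; simpl; ring).
  apply is_derive_scal, (is_derive_opp (fun e => dens_prim (x - s t) V0 c (e - s t))).
  apply (is_derive_comp (dens_prim (x - s t) V0 c) (fun e => e - s t)).
  - apply is_derive_dens_prim; [lra | nra | lra | exact Hdc].
  - auto_derive; auto; ring.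
Qed.

Lemma weighted_T1_integrand_dy_le_dens (alpha r : R) :
  0 <= alpha -> alpha <= v0 / 8 -> alpha <= gamma / (2 * V0) ->
  0 < r < t -> s r - s t <> c ->
  exp (alpha * Rabs (x - s t)) * Rabs (T1_integrand_dy gamma s v t x r)
    <= / (4 * sqrt PI) * - v r * dens (x - s t) V0 c (s r - s t).
Proof.
  intros Ha Ha1 Ha2 Hr Hdc.
  destruct (displacement r t ltac:(lra)) as [Hd1 Hd2].
  pose proof (weighted_heat_dy_le gamma v0 V0 alpha (x - s t) (s r - s t) (t - r) (v r)
                Hv0 HV0 Ha Ha1 Ha2 ltac:(lra) Hd1 Hd2 ltac:(lra) Hdc) as Hw.
  replace (x - s t - (s r - s t)) with (x - s r) in Hw by ring.
  rewrite (Rabs_left (v r)) in Hw by (pose proof (Hv r ltac:(lra)); lra).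
  exact Hw.
Qed.

Lemma weighted_RInt_T1_integrand_dy_le (alpha : R) :
  0 <= alpha -> alpha <= v0 / 8 -> alpha <= gamma / (2 * V0) ->
  exp (alpha * Rabs (x - s t)) * Rabs (RInt (T1_integrand_dy gamma s v t x) 0 t)
    <= / (4 * sqrt PI) * (2 * V0 * sqrt 48 + 4 * V0 * sqrt 12).
Proof.
  intros Ha Ha1 Ha2.
  assert (Hx0 : Rabs (x - x) <= Rabs (x - s t) / 4) by (rewrite Rminus_diag, Rabs_R0; lra).
  set (Ez := exp (alpha * Rabs (x - s t))).
  assert (HEz : 0 < Ez) by apply exp_pos.
  assert (HsPI : 0 < sqrt PI) by (pose proof PI2_3_2; apply sqrt_lt_R0; lra).
  set (k := / (4 * sqrt PI) / Ez).
  assert (Hk : 0 < k) by (apply Rdiv_lt_0_compat, HEz; apply Rinv_0_lt_compat; lra).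
  assert (Hprim : Rabs (RInt (T1_integrand_dy gamma s v t x) 0 t) <= prim k (s t) - prim k (s 0)).
  { refine (abs_RInt_le_primitive _ 0 t bound Ht _ _ (fun r => prim k (s r))
             (fun r => v r * (k * - dens (x - s t) V0 c (s r - s t)))
             (fun r => 0 < r < t /\ s r - s t = c) _ _ _ _ _).
    - intros r Hr; apply (T1_integrands_near_le x r Hx0 Hr).
    - intros r Hr; apply (continuous_integrands x r Hr).
    - intros r1 r2 [Hr1 E1] [Hr2 E2]; apply s_injective; lra.
    - intros r Hr HnE.
      assert (Hdc : s r - s t <> c) by (intros E; apply HnE; split; [exact Hr | exact E]).
      split; [apply is_derive_prim_comp; auto |].
      apply Rmult_le_reg_l with Ez; [exact HEz |].
      replace (Ez * (v r * (k * - dens (x - s t) V0 c (s r - s t))))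
        with (/ (4 * sqrt PI) * - v r * dens (x - s t) V0 c (s r - s t)) by (unfold k; field; lra).
      apply weighted_T1_integrand_dy_le_dens; auto.
    - intros r Hr; apply (continuous_comp s (prim k)); [apply Hcont_s; lra |].
      apply continuous_prim; destruct (displacement r t ltac:(lra)); nra.
    - apply (filterlim_comp _ _ _ s (prim k) _ _ _ Hs_right).
      apply continuous_prim; destruct (displacement 0 t ltac:(lra)); nra.
    - apply (filterlim_filter_le_1 (F := locally t)); [apply filter_le_within |].
      apply (continuous_comp s (prim k)); [apply Hcont_s; lra |]; apply continuous_prim; lra. }
  assert (Hincrease : prim k (s t) - prim k (s 0) <= k * (2 * V0 * sqrt 48 + 4 * V0 * sqrt 12)).
  { unfold prim; rewrite Rminus_diag.
    pose proof (dens_prim_increase_le (x - s t) V0 c (s 0 - s t) ltac:(lra) ltac:(lra)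
                  ltac:(destruct (displacement 0 t ltac:(lra)); nra)).
    nra. }
  replace (/ (4 * sqrt PI) * (2 * V0 * sqrt 48 + 4 * V0 * sqrt 12))
    with (Ez * (k * (2 * V0 * sqrt 48 + 4 * V0 * sqrt 12))) by (unfold k; field; lra).
  apply Rmult_le_compat_l; lra.
Qed.

End Solution.

Theorem mainTheorem7 (gamma v0 V0 C alpha : R) (g u0 s v : R -> R) (u : R -> R -> R) :
  0 < gamma -> 0 < v0 -> v0 <= V0 -> kinetics v0 V0 C g ->
  0 <= alpha -> alpha < Rmin (v0 / 8) (gamma / (2 * V0)) ->
  in_C_alpha alpha u0 ->
  fi_solution gamma v0 V0 g u0 s v u ->
  forall t x, 0 < t -> x <> s t ->
    ex_derive (fun y => T1 gamma s v t y) x /\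
    exp (alpha * Rabs (x - s t)) * Rabs (Derive (fun y => T1 gamma s v t y) x)
      <= bigM v0 V0 alpha gamma.
Proof.
  intros Hgamma Hv0 HV0 _ Ha Halpha _ Hsol t x Ht Hx.
  destruct Hsol as (Hs0 & Hs_right & Hds & Hv_cont & Hv & _).
  rewrite <- Hs0 in Hs_right at 2.
  assert (Hg0 : 0 <= gamma) by lra.
  pose proof (Rmin_l (v0 / 8) (gamma / (2 * V0))); pose proof (Rmin_r (v0 / 8) (gamma / (2 * V0))).
  pose proof (is_derive_T1 gamma v0 V0 s v t x Hg0 Hv0 HV0 Hs_right Hds Hv_cont Hv Ht Hx) as Hd.
  split; [eexists; exact Hd |].
  replace (Derive (fun y => T1 gamma s v t y) x) with (- RInt (T1_integrand_dy gamma s v t x) 0 t)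
    by (symmetry; apply is_derive_unique, Hd).
  rewrite Rabs_Ropp.
  eapply Rle_trans.
  { apply (weighted_RInt_T1_integrand_dy_le gamma v0 V0 s v t x Hg0 Hv0 HV0 Hs_right Hds Hv_cont Hv Ht Hx);
      lra. }
  eapply Rle_trans; [apply dens_total_le; lra |].
  (* only the last entry of the maximum in [bigM] is needed *)
  unfold bigM.
  pose proof (Rmax_r (/ 2 * (1 + V0 / v0) * exp alpha) (2 / sqrt gamma + 6)).
  pose proof (Rmax_r (8 / (exp 1 * v0)) (Rmax (/ 2 * (1 + V0 / v0) * exp alpha) (2 / sqrt gamma + 6))).
  pose proof (Rdiv_lt_0_compat 2 (sqrt gamma) ltac:(lra) (sqrt_lt_R0 gamma Hgamma)).
  nra.
Qed.
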